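(* In the two-unicast setting, suppose $k_{1-2}+k_{2-1}\ge\min(k_{12-1},k_{12-2})$ and $k_{1-2}\le k_{1-1}$. Set $R_1^*=k_{1-2}$ and $R_2^*=\min(k_{12-1},k_{12-2})-k_{1-2}$. Let the field $GF(q)$ and the local coding coefficients at the non-source nodes be fixed so that $\mathrm{rank}(H_{ij})=k_{j-i}$ and $\mathrm{rank}([H_{i1}~H_{i2}])=k_{12-i}$ for $i,j\in\{1,2\}$, and let $M_1$ ($k_{1-12}\times R_1^*$) and $M_2$ ($k_{2-12}\times R_2^*$) be full column rank source encoding matrices such that $[H_{i1}M_1~~H_{i2}M_2]$ has full column rank $R_1^*+R_2^*$ for $i=1,2$ (i.e., both terminals can decode both sources at rates $(R_1^*,R_2^* )$). Then every pair of nonnegative integers $(R_1,R_2)$ with $$R_1\le k_{1-1},\qquad R_2\le \min(k_{12-1},k_{12-2})-k_{1-2},\qquad R_1+R_2\le \mathrm{rank}([H_{11}~~H_{12}M_2])$$ is achievable.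
   Context: $G=(V,E)$ is a directed acyclic network with unit-capacity edges (each carrying one symbol of $GF(q)$ per use), sources $s_1,s_2$ (no incoming edges), terminals $t_1,t_2$ (no outgoing edges); $t_i$ wants the message of $s_i$. $k_{N_1-N_2}$ is the min-cut from $\{s_i:i\in N_1\}$ to $\{t_j:j\in N_2\}$. W.l.o.g. $s_i$ has exactly $k_{i-12}$ outgoing edges and $t_i$ has exactly $k_{12-i}$ incoming edges. For a linear network code over $GF(q)$ with fixed local coefficients at non-source nodes, $H_{ij}$ is the $k_{12-i}\times k_{j-12}$ matrix such that the vector of symbols on the incoming edges of $t_i$ equals $H_{i1}Y_1+H_{i2}Y_2$, where $Y_j$ is the vector of symbols on the outgoing edges of $s_j$; the source encoding is $Y_j=M_jU_j$ with $U_j$ the message vector of $s_j$. $(R_1,R_2)$ is achievable if for some finite field $GF(q)$ there is a linear network code such that, when $s_i$ observes $R_i$ independent symbols of $GF(q)$, $t_1$ uniquely recovers $s_1$'s message and $t_2$ uniquely recovers $s_2$'s message. *)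

From HB Require Import structures.
From mathcomp Require Import all_boot all_order all_algebra.
Set Implicit Arguments. Unset Strict Implicit. Unset Printing Implicit Defensive.
Import GRing.Theory.

(* A two-unicast network: a finite directed multigraph (edges are a finite
   type with tail/head maps; every edge has unit capacity), two sources and
   two terminals. *)
Record net := Net {
  V : finType;
  E : finType;
  tl : E -> V;
  hd : E -> V;
  s1 : V; s2 : V; t1 : V; t2 : V }.

Section Net.
Variable N : net.

Definition erel (C : {set E N}) : rel (V N) :=
  fun x y => [exists e, (e \notin C) && (tl e == x) && (hd e == y)].

Definition acyclic : Prop :=
  forall e : E N, ~~ connect (erel set0) (hd e) (tl e).

Definition in_edges (v : V N) : {set E N} := [set e | hd e == v].
Definition out_edges (v : V N) : {set E N} := [set e | tl e == v].

Definition valid_net : Prop :=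
  acyclic /\
  in_edges (s1 N) = set0 /\ in_edges (s2 N) = set0 /\
  out_edges (t1 N) = set0 /\ out_edges (t2 N) = set0 /\
  uniq [:: s1 N; s2 N; t1 N; t2 N].

Definition separates (C : {set E N}) (A B : {set V N}) : bool :=
  [forall a in A, forall b in B, ~~ connect (erel C) a b].

(* min-cut from A to B (default #|E| only if no cut exists) *)
Definition mincut (A B : {set V N}) : nat :=
  \big[minn/#|E N|]_(C : {set E N} | separates C A B) #|C|.

(* Linear network code with local coefficients be e' e (coefficient of the
   symbol on incoming edge e' in the symbol sent on edge e, used when
   hd e' = tl e) at non-source nodes.  y gives the symbols put by the sources
   on their outgoing edges.  edge_val computes the symbol carried by each
   edge (the DAG recursion stabilises after #|E| iterations). *)
Definition code_step (F : finFieldType) (be : E N -> E N -> F) (y : E N -> F)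
    (x : E N -> F) : E N -> F :=
  fun e => if (tl e == s1 N) || (tl e == s2 N) then y e
           else (\sum_(e' | hd e' == tl e) be e' e * x e')%R.

Definition edge_val (F : finFieldType) (be : E N -> E N -> F) (y : E N -> F)
  : E N -> F := iter #|E N| (code_step be y) (fun _ => 0%R).

Definition src_in (F : finFieldType) (Y1 : 'cV[F]_#|out_edges (s1 N)|)
    (Y2 : 'cV[F]_#|out_edges (s2 N)|) : E N -> F :=
  fun e => (\sum_b (if enum_val b == e then Y1 b 0 else 0)
          + \sum_b (if enum_val b == e then Y2 b 0 else 0))%R.

Definition rcv (F : finFieldType) (be : E N -> E N -> F) (t : V N) (y : E N -> F)
  : 'cV[F]_#|in_edges t| := \col_a edge_val be y (enum_val a).

Definition Hmx (F : finFieldType) (be : E N -> E N -> F) (t s : V N)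
  : 'M[F]_(#|in_edges t|, #|out_edges s|) :=
  \matrix_(a, b) edge_val be (fun e => ((e == enum_val b)%:R)%R) (enum_val a).

Definition achievable (R1 R2 : nat) : Prop :=
  exists (F : finFieldType) (be : E N -> E N -> F)
         (M1 : 'M[F]_(#|out_edges (s1 N)|, R1)) (M2 : 'M[F]_(#|out_edges (s2 N)|, R2)),
    (forall (U1 U1' : 'cV[F]_R1) (U2 U2' : 'cV[F]_R2),
        rcv be (t1 N) (src_in (M1 *m U1) (M2 *m U2))
          = rcv be (t1 N) (src_in (M1 *m U1') (M2 *m U2')) -> U1 = U1') /\
    (forall (U1 U1' : 'cV[F]_R1) (U2 U2' : 'cV[F]_R2),
        rcv be (t2 N) (src_in (M1 *m U1) (M2 *m U2))
          = rcv be (t2 N) (src_in (M1 *m U1') (M2 *m U2')) -> U2 = U2').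

End Net.

Definition k (N : net) (A B : {set V N}) := mincut A B.

From HB Require Import structures.
From mathcomp Require Import all_boot all_order all_algebra zify.
Set Implicit Arguments. Unset Strict Implicit. Unset Printing Implicit Defensive.
Import GRing.Theory.
Local Open Scope ring_scope.

(* It then proves rank lemmas over an arbitrary field, the main one being a
   selection lemma ([independent_cols]): if d1 <= rank A, d2 <= rank B and
   d1 + d2 <= rank [A, B], then [A P1, B P2] has full column rank d1 + d2 for
   suitable P1, P2.

   For the theorem, apply it to A = H11, B = H12 M2 to get encodings P1 and
   M2 Q2; terminal t1 then decodes both sources.  At t2 the interference
   H21 P1 U1 lies in the column space of H21, which equals that of H21 M1 as
   both have rank k_{1-2}; since [H21 M1, H22 M2] has full column rank, the
   term H22 M2 Q2 U2 vanishes only if Q2 U2 = 0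
   ([aligned_interference_vanishes]), and Q2 U2 = 0 forces U2 = 0 by the
   full rank at t1. *)

Section LinearCode.
Variables (N : net) (F : finFieldType) (be : E N -> E N -> F).

Lemma iter_code_step_lincomb (I : finType) (c : I -> F) (f : I -> E N -> F)
    (y : E N -> F) n e :
  (forall e, y e = \sum_i c i * f i e) ->
  iter n (code_step be y) (fun _ => 0) e
  = \sum_i c i * iter n (code_step be (f i)) (fun _ => 0) e.
Proof.
move=> yE; elim: n e => [|n IHn] e /=; first by rewrite big1 // => i _; rewrite mulr0.
have stepE y' x : code_step be y' x e =
    if (tl e == s1 N) || (tl e == s2 N) then y' e
    else \sum_(e' | hd e' == tl e) be e' e * x e' by [].
under eq_bigr do rewrite stepE; rewrite stepE; case: ifP => _ //.
transitivity (\sum_(e' | hd e' == tl e) \sum_i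
    c i * (be e' e * iter n (code_step be (f i)) (fun _ => 0) e')).
  by apply: eq_bigr => e' _; rewrite IHn mulr_sumr; apply: eq_bigr => i _; rewrite mulrCA.
by rewrite exchange_big; apply: eq_bigr => i _; rewrite mulr_sumr.
Qed.

Lemma edge_val_lincomb (I : finType) (c : I -> F) (f : I -> E N -> F)
    (y : E N -> F) e :
  (forall e, y e = \sum_i c i * f i e) ->
  edge_val be y e = \sum_i c i * edge_val be (f i) e.
Proof. exact: iter_code_step_lincomb. Qed.

Lemma rcv_lin t (Y1 : 'cV[F]_#|out_edges (s1 N)|) (Y2 : 'cV[F]_#|out_edges (s2 N)|) :
  rcv be t (src_in Y1 Y2) = Hmx be t (s1 N) *m Y1 + Hmx be t (s2 N) *m Y2.
Proof.
pose c i := match i with inl b => Y1 b 0 | inr b => Y2 b 0 end.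
pose f (i : 'I_#|out_edges (s1 N)| + 'I_#|out_edges (s2 N)|) (e : E N) : F :=
  match i with
  | inl b => (e == enum_val b)%:R | inr b => (e == enum_val b)%:R end.
apply/matrixP => a j; rewrite (ord1 j) !mxE (@edge_val_lincomb _ c f).
  by rewrite big_sumType; congr (_ + _); apply: eq_bigr => b _; rewrite !mxE mulrC.
move=> e; rewrite /src_in big_sumType.
by congr (_ + _); apply: eq_bigr => b _ /=; rewrite eq_sym; case: eqP;
  rewrite ?mulr1 ?mulr0.
Qed.

Lemma achievable_of_kernels R1 R2
    (P1 : 'M[F]_(#|out_edges (s1 N)|, R1)) (P2 : 'M[F]_(#|out_edges (s2 N)|, R2)) :
  (forall (u : 'cV[F]_R1) (v : 'cV[F]_R2),
     Hmx be (t1 N) (s1 N) *m P1 *m u + Hmx be (t1 N) (s2 N) *m P2 *m v = 0 -> u = 0) ->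
  (forall (u : 'cV[F]_R1) (v : 'cV[F]_R2),
     Hmx be (t2 N) (s1 N) *m P1 *m u + Hmx be (t2 N) (s2 N) *m P2 *m v = 0 -> v = 0) ->
  achievable N R1 R2.
Proof.
have diffE t (U1 U1' : 'cV[F]_R1) (U2 U2' : 'cV[F]_R2) :
    rcv be t (src_in (P1 *m U1) (P2 *m U2))
      = rcv be t (src_in (P1 *m U1') (P2 *m U2')) ->
    Hmx be t (s1 N) *m P1 *m (U1 - U1') + Hmx be t (s2 N) *m P2 *m (U2 - U2') = 0.
  rewrite !rcv_lin !mulmxA => heq.
  by rewrite !mulmxBr addrACA -opprD heq subrr.
move=> dec1 dec2; exists F, be, P1, P2; split=> U1 U1' U2 U2' /diffE.
  by move/dec1/eqP; rewrite subr_eq0 => /eqP.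
by move/dec2/eqP; rewrite subr_eq0 => /eqP.
Qed.

End LinearCode.

Section RankLemmas.
Variable F : fieldType.

Lemma rank_row_mx_le m n1 n2 (A : 'M[F]_(m, n1)) (B : 'M[F]_(m, n2)) :
  (\rank (row_mx A B) <= \rank A + \rank B)%N.
Proof.
have := (mxrank_adds_leqif A^T B^T).1.
by rewrite addsmxE -tr_row_mx !mxrank_tr.
Qed.

Lemma full_col_rank_inj m n (K : 'M[F]_(m, n)) (v : 'cV[F]_n) :
  \rank K = n -> K *m v = 0 -> v = 0.
Proof.
move=> rK Kv; have freeKT : row_free K^T by rewrite /row_free mxrank_tr rK.
apply: trmx_inj; apply: (row_free_inj freeKT).
by rewrite /= trmx0 mul0mx -trmx_mul Kv trmx0.
Qed.

Lemma row_mx_full_rank_inj m n1 n2 (A : 'M[F]_(m, n1)) (B : 'M[F]_(m, n2))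
    (u : 'cV[F]_n1) (v : 'cV[F]_n2) :
  \rank (row_mx A B) = (n1 + n2)%N -> A *m u + B *m v = 0 -> u = 0 /\ v = 0.
Proof.
move=> rAB; rewrite -mul_row_col => /(full_col_rank_inj rAB)/eqP.
by rewrite col_mx_eq0 => /andP[/eqP -> /eqP ->].
Qed.

Lemma submx_of_rank m n (U : 'M[F]_(m, n)) d : (d <= \rank U)%N ->
  exists V : 'M[F]_(d, n), (V <= U)%MS /\ \rank V = d.
Proof.
move=> le_dU; exists (pid_mx d *m row_base U); split.
  by apply: submx_trans (submxMl _ _) _; rewrite eq_row_base.
by rewrite mxrankMfree ?row_base_free // rank_pid_mx.
Qed.

Lemma independent_rows_of_disjoint p q m (X : 'M[F]_(p, m)) (Y : 'M[F]_(q, m))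
    m1 m2 (U : 'M[F]_(m1, m)) (W : 'M[F]_(m2, m)) d1 d2 :
  (U <= X)%MS -> (W <= Y)%MS -> (d1 <= \rank U)%N -> (d2 <= \rank W)%N ->
  \rank (U :&: W)%MS = 0%N ->
  exists (Q1 : 'M[F]_(d1, p)) (Q2 : 'M[F]_(d2, q)),
    \rank (col_mx (Q1 *m X) (Q2 *m Y)) = (d1 + d2)%N.
Proof.
move=> sUX sWY le_d1 le_d2 capUW0.
have [U' [sU'U rU']] := submx_of_rank le_d1.
have [W' [sW'W rW']] := submx_of_rank le_d2.
exists (U' *m pinvmx X), (W' *m pinvmx Y).
rewrite !mulmxKpV ?(submx_trans sU'U) ?(submx_trans sW'W) // -addsmxE.
have capU'W'0 : \rank (U' :&: W')%MS = 0%N.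
  by apply/eqP; rewrite -leqn0 -capUW0 mxrankS // capmxS.
by have := mxrank_sum_cap U' W'; rewrite capU'W'0 addn0 rU' rW'.
Qed.

Lemma independent_rows p q m (X : 'M[F]_(p, m)) (Y : 'M[F]_(q, m)) d1 d2 :
  (d1 <= \rank X)%N -> (d2 <= \rank Y)%N -> (d1 + d2 <= \rank (col_mx X Y))%N ->
  exists (Q1 : 'M[F]_(d1, p)) (Q2 : 'M[F]_(d2, q)),
    \rank (col_mx (Q1 *m X) (Q2 *m Y)) = (d1 + d2)%N.
Proof.
rewrite -addsmxE => le_d1 le_d2 le_d12.
(* Build W <= Y with rank W = max(d2, rank C) and X + W = X + Y, where
   C = Y :\: X and W = C + D for a piece D of Y :&: X; the complement of
   X :&: W in X is then disjoint from W and has rank rank (X + Y) - rank W,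
   which is at least d1. *)
set C := (Y :\: X)%MS.
have rC : (\rank (Y :&: X) + \rank C)%N = \rank Y := mxrank_cap_compl Y X.
have rXY := mxrank_sum_cap X Y; rewrite capmxC in rXY.
have le_D : (d2 - \rank C <= \rank (Y :&: X)%MS)%N by lia.
have [D [sD rD]] := submx_of_rank le_D.
have capCX0 : \rank (C :&: X)%MS = 0%N by rewrite capmx_diff mxrank0.
have sDX : (D <= X)%MS by apply: submx_trans sD (capmxSr _ _).
have sCY : (C <= Y)%MS by apply: diffmxSl.
set W := (C + D)%MS.
have rW : \rank W = (\rank C + \rank D)%N.
  have capCD0 : \rank (C :&: D)%MS = 0%N.
    by apply/eqP; rewrite -leqn0 -capCX0 mxrankS // capmxS.
  by have := mxrank_sum_cap C D; rewrite capCD0 addn0.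
have sWY : (W <= Y)%MS.
  by rewrite addsmx_sub sCY (submx_trans sD (capmxSl _ _)).
have rXW : \rank (X + W)%MS = \rank (X + Y)%MS.
  apply/eqP; rewrite eqn_leq mxrankS ?addsmxS //=.
  have := mxrank_sum_cap X C; rewrite capmxC capCX0 addn0.
  have : (\rank (X + C) <= \rank (X + W))%N by rewrite mxrankS ?addsmxS ?addsmxSl.
  lia.
apply: (@independent_rows_of_disjoint _ _ _ X Y _ _ (X :\: W)%MS W) => //.
- exact: diffmxSl.
- have := mxrank_cap_compl X W; have := mxrank_sum_cap X W; lia.
- lia.
- by rewrite capmx_diff mxrank0.
Qed.

Lemma independent_cols m p q (A : 'M[F]_(m, p)) (B : 'M[F]_(m, q)) d1 d2 :
  (d1 <= \rank A)%N -> (d2 <= \rank B)%N -> (d1 + d2 <= \rank (row_mx A B))%N ->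
  exists (P1 : 'M[F]_(p, d1)) (P2 : 'M[F]_(q, d2)),
    \rank (row_mx (A *m P1) (B *m P2)) = (d1 + d2)%N.
Proof.
rewrite -(mxrank_tr A) -(mxrank_tr B) -(mxrank_tr (row_mx A B)) tr_row_mx.
move=> le_d1 le_d2 le_d12; have [Q1 [Q2 rQ]] := independent_rows le_d1 le_d2 le_d12.
exists Q1^T, Q2^T; rewrite -mxrank_tr tr_row_mx !trmx_mul !trmxK.
exact: rQ.
Qed.

Lemma aligned_interference_vanishes m p q r1 r2 s (A : 'M[F]_(m, p))
    (B : 'M[F]_(m, q)) (M1 : 'M[F]_(p, r1)) (M2 : 'M[F]_(q, r2)) (P : 'M[F]_(p, s))
    (u : 'cV[F]_s) (w : 'cV[F]_r2) :
  \rank (A *m M1) = \rank A -> \rank (row_mx (A *m M1) (B *m M2)) = (r1 + r2)%N ->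
  A *m P *m u + B *m M2 *m w = 0 -> w = 0.
Proof.
move=> rAM1 rfull eq0.
have sAM1A : ((A *m M1)^T <= A^T)%MS by rewrite trmx_mul submxMl.
have sAAM1 : (A^T <= (A *m M1)^T)%MS.
  by rewrite -(geq_leqif (mxrank_leqif_sup sAM1A)) !mxrank_tr rAM1.
have : ((A *m P *m u)^T <= (A *m M1)^T)%MS.
  by rewrite (submx_trans _ sAAM1) // !trmx_mul mulmxA submxMl.
case/submxP=> D APuE.
have APuE' : A *m P *m u = A *m M1 *m D^T.
  by rewrite -(trmxK (A *m P *m u)) APuE trmx_mul trmxK.
apply: (proj2 (row_mx_full_rank_inj (u := D^T) rfull _)).
by rewrite -APuE'.
Qed.

End RankLemmas.

Local Close Scope ring_scope.

Theorem theorem3 (N : net) (HN : valid_net N)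
  (Hout1 : #|out_edges (s1 N)| = k [set s1 N] [set (t1 N); (t2 N)])
  (Hout2 : #|out_edges (s2 N)| = k [set s2 N] [set (t1 N); (t2 N)])
  (Hin1 : #|in_edges (t1 N)| = k [set (s1 N); (s2 N)] [set t1 N])
  (Hin2 : #|in_edges (t2 N)| = k [set (s1 N); (s2 N)] [set t2 N])
  (Hcut : minn (k [set (s1 N); (s2 N)] [set t1 N]) (k [set (s1 N); (s2 N)] [set t2 N])
          <= k [set s1 N] [set t2 N] + k [set s2 N] [set t1 N])
  (H12 : k [set s1 N] [set t2 N] <= k [set s1 N] [set t1 N])
  (F : finFieldType) (be : E N -> E N -> F)
  (HrH11 : \rank (Hmx be (t1 N) (s1 N)) = k [set s1 N] [set t1 N])
  (HrH12 : \rank (Hmx be (t1 N) (s2 N)) = k [set s2 N] [set t1 N])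
  (HrH21 : \rank (Hmx be (t2 N) (s1 N)) = k [set s1 N] [set t2 N])
  (HrH22 : \rank (Hmx be (t2 N) (s2 N)) = k [set s2 N] [set t2 N])
  (HrH1 : \rank (row_mx (Hmx be (t1 N) (s1 N)) (Hmx be (t1 N) (s2 N)))
          = k [set (s1 N); (s2 N)] [set t1 N])
  (HrH2 : \rank (row_mx (Hmx be (t2 N) (s1 N)) (Hmx be (t2 N) (s2 N)))
          = k [set (s1 N); (s2 N)] [set t2 N])
  (M1 : 'M[F]_(#|out_edges (s1 N)|, k [set s1 N] [set t2 N]))
  (M2 : 'M[F]_(#|out_edges (s2 N)|,
               minn (k [set (s1 N); (s2 N)] [set t1 N]) (k [set (s1 N); (s2 N)] [set t2 N])
               - k [set s1 N] [set t2 N]))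
  (HM1 : \rank M1 = k [set s1 N] [set t2 N])
  (HM2 : \rank M2 = minn (k [set (s1 N); (s2 N)] [set t1 N]) (k [set (s1 N); (s2 N)] [set t2 N])
                    - k [set s1 N] [set t2 N])
  (Hdec1 : \rank (row_mx (Hmx be (t1 N) (s1 N) *m M1) (Hmx be (t1 N) (s2 N) *m M2))
           = k [set s1 N] [set t2 N]
             + (minn (k [set (s1 N); (s2 N)] [set t1 N]) (k [set (s1 N); (s2 N)] [set t2 N])
                - k [set s1 N] [set t2 N]))
  (Hdec2 : \rank (row_mx (Hmx be (t2 N) (s1 N) *m M1) (Hmx be (t2 N) (s2 N) *m M2))
           = k [set s1 N] [set t2 N]
             + (minn (k [set (s1 N); (s2 N)] [set t1 N]) (k [set (s1 N); (s2 N)] [set t2 N])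
                - k [set s1 N] [set t2 N]))
  (R1 R2 : nat)
  (HR1 : R1 <= k [set s1 N] [set t1 N])
  (HR2 : R2 <= minn (k [set (s1 N); (s2 N)] [set t1 N]) (k [set (s1 N); (s2 N)] [set t2 N])
               - k [set s1 N] [set t2 N])
  (HR12 : R1 + R2 <= \rank (row_mx (Hmx be (t1 N) (s1 N)) (Hmx be (t1 N) (s2 N) *m M2))) :
  achievable N R1 R2.
Proof.
Local Open Scope ring_scope.
set T11 := Hmx be (t1 N) (s1 N); set T12 := Hmx be (t1 N) (s2 N).
set T21 := Hmx be (t2 N) (s1 N); set T22 := Hmx be (t2 N) (s2 N).
(* t1 decodes s2 at rate R2^*, so T12 M2 has rank at least R2^*. *)
have rank_T12M2 :
    (minn (k [set (s1 N); (s2 N)] [set t1 N]) (k [set (s1 N); (s2 N)] [set t2 N])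
     - k [set s1 N] [set t2 N] <= \rank (T12 *m M2))%N.
  have := rank_row_mx_le (T11 *m M1) (T12 *m M2).
  have := rank_leq_col (T11 *m M1); rewrite Hdec1; lia.
(* T21 M1 spans the column space of T21: both have rank k_{1-2}. *)
have rank_T21M1 : \rank (T21 *m M1) = \rank T21.
  apply/eqP; rewrite eqn_leq mxrankM_maxl /= HrH21.
  have := rank_row_mx_le (T21 *m M1) (T22 *m M2).
  have := rank_leq_col (T22 *m M2); rewrite Hdec2; lia.
have rank_T11 : (R1 <= \rank T11)%N by rewrite HrH11.
have [P1 [Q2 rank_t1]] :=
  independent_cols rank_T11 (leq_trans HR2 rank_T12M2) HR12.
have dec_t1 (u : 'cV[F]_R1) (v : 'cV[F]_R2) :
    T11 *m P1 *m u + T12 *m M2 *m Q2 *m v = 0 -> u = 0 /\ v = 0.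
  exact: row_mx_full_rank_inj rank_t1.
apply: (achievable_of_kernels (P1 := P1) (P2 := M2 *m Q2)) => u v; rewrite mulmxA.
  by case/dec_t1.
(* At t2 the interference of s1 is aligned with T21 M1, hence Q2 v = 0. *)
rewrite -(mulmxA _ Q2) => /(aligned_interference_vanishes rank_T21M1 Hdec2) Q2v0.
apply: (proj2 (dec_t1 0 v _)).
by rewrite mulmx0 add0r -mulmxA Q2v0 mulmx0.
Qed.
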